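(* Let $\Omega\subseteq\mathbb{R}^d$ be compact and convex with non-empty interior $\Omega^\circ$, and let $p_0,p_1$ be Lebesgue densities supported on $\Omega$ that are continuous, uniformly bounded and bounded away from zero on $\Omega$. For $t\in(0,1)$, $z\in\Omega$ let $S_t(z)=\{\delta: z-t\delta\in\Omega,\ z+(1-t)\delta\in\Omega\}$ and for $z\in\Omega^\circ$ $$v(t,z)=\frac{\int_{S_t(z)}\delta\,p_0(z-t\delta)p_1(z+(1-t)\delta)d\delta}{\int_{S_t(z)}p_0(z-t\delta)p_1(z+(1-t)\delta)d\delta}.$$ Let $\hat p_0,\hat p_1$ be estimators (based on $n$ observations) of $p_0,p_1$, redefined to be $0$ outside $\Omega$, let $$r_n=\sup_{x\in\Omega}\max\Big\{\Big|\ln\frac{\hat p_0(x)}{p_0(x)}\Big|,\Big|\ln\frac{\hat p_1(x)}{p_1(x)}\Big|\Big\},$$ and define $\hat v^{\mathrm{den}}(t,z)$ by the same formula as $v(t,z)$ with $p_0,p_1$ replaced by $\hat p_0,\hat p_1$. Then for all $n\ge1$, $$\|\hat v^{\mathrm{den}}-v\|_\infty=\sup_{t\in[0,1],\,z\in\Omega^\circ}\|\hat v^{\mathrm{den}}(t,z)-v(t,z)\|\le2\,\mathrm{diam}(\Omega)(e^{4r_n}-1).$$ If $r_n=o_p(1)$ as $n\to\infty$, then $\sup_{t\in[0,1],\,z\in\Omega^\circ}\|\hat v^{\mathrm{den}}(t,z)-v(t,z)\|=O_p(r_n)$ as $n\to\infty$.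
   Context: The estimators need not be densities; $\hat v^{\mathrm{den}}$ is the density-based estimator of the rectified flow velocity field. *)

From HB Require Import structures.
From mathcomp Require Import all_boot all_order all_algebra.
From mathcomp Require Import all_classical all_reals all_analysis.
Set Implicit Arguments. Unset Strict Implicit. Unset Printing Implicit Defensive.
Import Order.TTheory GRing.Theory Num.Theory.
Import numFieldNormedType.Exports.
Local Open Scope classical_set_scope.
Local Open Scope ring_scope.

Section Defs.
Variable R : realType.

(* Borel sigma-algebra on R^d: generated by the coordinate maps. *)
Definition rV_measurable (d : nat) (A : set 'rV[R]_d) : Prop :=
  g_sigma_preimage (fun (i : 'I_d) (x : 'rV[R]_d) => x ord0 i) A.

Definition rV_mfun (d : nat) (f : 'rV[R]_d -> R) : Prop :=
  forall B : set R, measurable B -> rV_measurable (f @^-1` B).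

(* Lebesgue integral over R^d, computed as an iterated one-dimensional
   Lebesgue integral (equal to the d-dimensional Lebesgue integral for
   integrable integrands by Fubini). *)
Fixpoint iint (d : nat) : ('rV[R]_d -> R) -> R :=
  match d return ('rV[R]_d -> R) -> R with
  | 0 => fun f => f 0
  | d'.+1 => fun f =>
      Rintegral (@lebesgue_measure R) setT
        (fun x : R => iint (fun y : 'rV[R]_d' =>
                              f (row_mx (\row_(j < 1) x) y)))
  end.

Definition norm2 (d : nat) (x : 'rV[R]_d) : R :=
  Num.sqrt (\sum_(i < d) x ord0 i ^+ 2).

Definition diam (d : nat) (Om : set 'rV[R]_d) : R :=
  sup [set norm2 (x - y) | x in Om & y in Om].

Definition convex_rV (d : nat) (Om : set 'rV[R]_d) : Prop :=
  forall x y, Om x -> Om y -> forall l : R, 0 <= l <= 1 ->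
    Om ((1 - l) *: x + l *: y).

Definition Sset (d : nat) (Om : set 'rV[R]_d) (t : R) (z : 'rV[R]_d)
  : set 'rV[R]_d :=
  [set delta | Om (z - t *: delta) /\ Om (z + (1 - t) *: delta)].

Definition vel (d : nat) (Om : set 'rV[R]_d) (p0 p1 : 'rV[R]_d -> R)
  (t : R) (z : 'rV[R]_d) : 'rV[R]_d :=
  \row_(i < d)
    (iint (fun delta => \1_(Sset Om t z) delta * delta ord0 i
              * p0 (z - t *: delta) * p1 (z + (1 - t) *: delta))
     / iint (fun delta => \1_(Sset Om t z) delta
              * p0 (z - t *: delta) * p1 (z + (1 - t) *: delta))).

(* |ln (a / b)| as an extended real; +oo when a / b <= 0
   (the log ratio is then undefined / infinite). *)
Definition lnratio (a b : R) : \bar R :=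
  if 0 < a / b then (`|ln (a / b)|)%:E else +oo%E.

Definition rlog (d : nat) (Om : set 'rV[R]_d) (p0 p1 q0 q1 : 'rV[R]_d -> R)
  : \bar R :=
  ereal_sup [set maxe (lnratio (q0 x) (p0 x)) (lnratio (q1 x) (p1 x))
            | x in Om].

Definition supdiff (d : nat) (Om : set 'rV[R]_d) (p0 p1 q0 q1 : 'rV[R]_d -> R)
  : \bar R :=
  ereal_sup [set (norm2 (vel Om q0 q1 tz.1 tz.2 - vel Om p0 p1 tz.1 tz.2))%:E
            | tz in [set tz : R * 'rV[R]_d |
                     0 <= tz.1 <= 1 /\ interior Om tz.2]].

Definition good_density (d : nat) (Om : set 'rV[R]_d) (p : 'rV[R]_d -> R)
  : Prop :=
  rV_mfun p /\
  (forall x, 0 <= p x) /\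
  (forall x, ~ Om x -> p x = 0) /\
  iint p = 1 /\
  {within Om, continuous p} /\
  (exists M : R, forall x, Om x -> p x <= M) /\
  (exists c : R, 0 < c /\ forall x, Om x -> c <= p x).

Definition estimator (d : nat) (Om : set 'rV[R]_d) (q : 'rV[R]_d -> R)
  : Prop := rV_mfun q /\ (forall x, ~ Om x -> q x = 0).

End Defs.

(* Outer probability (for possibly non-measurable events). *)
Definition outerP (R : realType) (dT : measure_display) (T : measurableType dT)
  (P : probability T R) (A : set T) : \bar R :=
  ereal_inf [set P B | B in [set B | measurable B /\ A `<=` B]].

Definition o_p1 (R : realType) (dT : measure_display) (T : measurableType dT)
  (P : probability T R) (X : nat -> T -> \bar R) : Prop :=
  forall eps : R, 0 < eps ->
    (fun n => outerP P [set w | (eps%:E < X n w)%E]) @ \oo --> 0%E.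

Definition O_p (R : realType) (dT : measure_display) (T : measurableType dT)
  (P : probability T R) (X a : nat -> T -> \bar R) : Prop :=
  forall eps : R, 0 < eps -> exists M : R, 0 < M /\
    exists N : nat, forall n, (N <= n)%N ->
      (outerP P [set w | (M%:E * a n w < X n w)%E] <= eps%:E)%E.

From HB Require Import structures.
From mathcomp Require Import all_boot all_order all_algebra.
From mathcomp Require Import all_classical all_reals all_analysis.
From mathcomp Require Import measurable_realfun ring lra.
Set Implicit Arguments. Unset Strict Implicit. Unset Printing Implicit Defensive.
Import Order.TTheory GRing.Theory Num.Theory.
Import numFieldNormedType.Exports.
Local Open Scope classical_set_scope.
Local Open Scope ring_scope.

(* Both v and v^den are weighted means of delta, for the weights
   W(delta) = p0(z - t delta) p1(z + (1 - t) delta) and its analogue W' built from the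
   estimators; both weights vanish outside the ball of radius diam Om.  If e^r bounds
   the ratios q_i / p_i and p_i / q_i, then W and W' agree up to the factor
   rho = e^(2r), so the normalized weights satisfy
   |W' / int W' - W / int W| <= (rho^2 - 1) W / int W pointwise.  Pairing the
   difference of the means with delta and using Cauchy-Schwarz under the integral
   gives |v^den - v| <= diam Om (e^(4r) - 1), half the stated bound.  For r <= 1 this
   is at most 4 e^4 diam Om r, and {r_n <= 1} has probability tending to one, whence
   the O_p(r_n) rate.  Integrals are handled by identifying the iterated integral
   iint with the integral against the d-fold product of Lebesgue measures, which
   makes them linear and monotone. *)

Section rvec_measurable.
Variable R : realType.

Definition rvec (d : nat) := 'rV[R]_d.

HB.instance Definition _ d := Pointed.on (rvec d).

Let rvec_measurable0 d : @rV_measurable R d set0.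
Proof. exact: sigma_algebra0. Qed.

Let rvec_measurableC d A : @rV_measurable R d A -> rV_measurable (~` A).
Proof. exact: sigma_algebraC. Qed.

Let rvec_measurable_bigcup d (F : (set (rvec d))^nat) :
  (forall i, rV_measurable (F i)) -> rV_measurable (\bigcup_i F i).
Proof. exact: sigma_algebra_bigcup. Qed.

HB.instance Definition _ d := @isMeasurable.Build default_measure_display
  (rvec d) (@rV_measurable R d) (@rvec_measurable0 d) (@rvec_measurableC d)
  (@rvec_measurable_bigcup d).

End rvec_measurable.

Section rvec_coord.
Context {R : realType}.
Local Notation rvec := (rvec R).

Lemma measurable_coord d (i : 'I_d) :
  measurable_fun [set: rvec d] (fun v => v ord0 i).
Proof.
move=> _ B mB; rewrite setTI; apply: sub_sigma_algebra.
by rewrite (bigD1 i) //=; left; exists B; rewrite ?setTI.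
Qed.

Lemma measurable_fun_rvec dT (T : measurableType dT) d (f : T -> rvec d) :
  (forall i, measurable_fun [set: T] (fun x => f x ord0 i)) ->
  measurable_fun [set: T] f.
Proof.
move=> mf; apply: (@measurability _ _ _ _ _ _ (\big[setU/set0]_(i < d)
  preimage_set_system setT (fun v : rvec d => v ord0 i) measurable)) => //.
move=> _ [B + <-].
elim/big_ind: _ => [[]|G1 G2 ih1 ih2 [/ih1|/ih2] //|i _ [C mC <-]].
by rewrite setTI -comp_preimage; exact: mf.
Qed.

(* The first factor is [measurableTypeR R], the measurable space of
   [lebesgue_measure]: [R] itself carries the same sigma-algebra but under another
   display, which unification does not identify. *)
Definition row_cons d (xy : measurableTypeR R * rvec d) : rvec d.+1 :=
  row_mx (\row_(j < 1) xy.1) xy.2.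

Definition row_uncons d (v : rvec d.+1) : measurableTypeR R * rvec d :=
  (lsubmx (v : 'rV_(1 + d)) 0 0, rsubmx (v : 'rV_(1 + d))).

Lemma row_consK d : cancel (@row_cons d) (@row_uncons d).
Proof. by case=> x y; rewrite /row_uncons row_mxKl row_mxKr mxE. Qed.

Lemma row_unconsK d : cancel (@row_uncons d) (@row_cons d).
Proof.
move=> v; apply/rowP => i; rewrite /row_cons /row_uncons mxE.
by case: splitP => k ik; rewrite /= !mxE; congr (v _ _); apply/val_inj;
  rewrite /= ik ?ord1.
Qed.

Lemma row_cons_lshift d x (y : rvec d) (k : 'I_1) :
  row_cons (x, y) ord0 (lshift d k) = x.
Proof. by rewrite /row_cons (row_mxEl (\row_(j < 1) x) y) mxE. Qed.

Lemma row_cons_rshift d x (y : rvec d) i :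
  row_cons (x, y) ord0 (rshift 1 i) = y ord0 i.
Proof. by rewrite /row_cons (row_mxEr (\row_(j < 1) x) y). Qed.

Lemma measurable_row_cons d :
  measurable_fun [set: measurableTypeR R * rvec d] (@row_cons d).
Proof.
apply: measurable_fun_rvec => i; case: (split_ordP (i : 'I_(1 + d))) => k ->.
  rewrite (_ : (fun _ => _) = fst); first exact: measurable_fst.
  by apply/funext => -[x y]; rewrite row_cons_lshift.
rewrite (_ : (fun _ => _) = (fun v : rvec d => v ord0 k) \o snd).
  exact: measurableT_comp (measurable_coord k) measurable_snd.
by apply/funext => -[x y]; rewrite row_cons_rshift.
Qed.

Lemma measurable_row_uncons d : measurable_fun [set: rvec d.+1] (@row_uncons d).
Proof.
apply: measurable_fun_pair.
  by under eq_fun do rewrite mxE; exact: measurable_coord.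
by apply: measurable_fun_rvec => j; under eq_fun do rewrite mxE; exact: measurable_coord.
Qed.

End rvec_coord.

Arguments row_cons {R d}.
Arguments row_uncons {R d}.

Section sigma_finite.
Context {R : realType} dT dU (T : measurableType dT) (U : measurableType dU).
Local Open Scope ereal_scope.

(* The library proves this only as a section-local fact, and its instance is
   shadowed by the measure instance of [m1 \x m2]. *)
Lemma sigma_finite_product_measure1 (m1 : {sigma_finite_measure set T -> \bar R})
    (m2 : {sigma_finite_measure set U -> \bar R}) :
  sigma_finite [set: T * U] (m1 \x m2).
Proof.
have /sigma_finiteP[F [UF ndF mF]] := sigma_finiteT m1.
have /sigma_finiteP[G [UG ndG mG]] := sigma_finiteT m2.
exists (fun n => F n `*` G n).
  apply/seteqP; split => [[x y] _|//].
  have [i _ Fx] : (\bigcup_n F n) x by rewrite -UF.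
  have [j _ Gy] : (\bigcup_n G n) y by rewrite -UG.
  exists (maxn i j) => //; split.
  - by move: Fx; apply/subsetPset/ndF/leq_maxl.
  - by move: Gy; apply/subsetPset/ndG/leq_maxr.
move=> n; have [mFn Fnoo] := mF n; have [mGn Gnoo] := mG n.
split; first exact: measurableX.
by rewrite product_measure1E // lte_mul_pinfty // ge0_fin_numE.
Qed.

Lemma sigma_finite_pushforward (m : {measure set T -> \bar R}) (f : T -> U)
    (g : U -> T) :
  sigma_finite [set: T] m -> measurable_fun [set: U] g -> cancel f g ->
  sigma_finite [set: U] (pushforward m f).
Proof.
move=> [F UF mF] mg fK.
exists (fun n => g @^-1` F n); first by rewrite -preimage_bigcup -UF.
move=> n; have [mFn Fnoo] := mF n; split.
  by rewrite -[X in measurable X]setTI; exact: mg.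
by rewrite /pushforward -comp_preimage (_ : g \o f = id) //; apply/funext.
Qed.

End sigma_finite.

Section lebesgue_rV.
Variable R : realType.
Local Open Scope ereal_scope.

Section lebesgue_rV_succ.
Variables (d : nat) (m : {sigma_finite_measure set rvec R d -> \bar R}).

Definition lebesgue_rV_succ := pushforward (lebesgue_measure \x m) (@row_cons R d).

(* The library's measure instance on [pushforward] takes the measurability of
   [row_cons] as an argument that inference cannot supply. *)
Let lebesgue_rV_succ_measure : {measure set rvec R d.+1 -> \bar R}.
Proof.
refine (lebesgue_rV_succ : {measure set _ -> \bar R}).
exact: measurable_row_cons.
Defined.

HB.instance Definition _ := Measure.copy lebesgue_rV_succ lebesgue_rV_succ_measure.

HB.instance Definition _ := Measure_isSigmaFinite.Build _ _ _ lebesgue_rV_succ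
  (sigma_finite_pushforward (sigma_finite_product_measure1 lebesgue_measure m)
    (@measurable_row_uncons R d) (@row_consK R d)).

End lebesgue_rV_succ.

Fixpoint lebesgue_rV d : {sigma_finite_measure set rvec R d -> \bar R} :=
  if d is d'.+1 then [the {sigma_finite_measure set _ -> \bar R} of
                      lebesgue_rV_succ (lebesgue_rV d')]
  else [the {sigma_finite_measure set _ -> \bar R} of \d_(0%R : rvec R 0)].

End lebesgue_rV.

Lemma integrable_bounded_support (R : realType) dT (T : measurableType dT)
    (m : {measure set T -> \bar R}) (A : set T) (g : T -> R) (M : R) :
  measurable A -> (m A < +oo)%E -> measurable_fun [set: T] g ->
  (forall x, `|g x| <= M) -> (forall x, ~ A x -> g x = 0) ->
  m.-integrable [set: T] (EFin \o g).
Proof.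
move=> mA mAoo mg gM g0.
have : m.-integrable A (EFin \o g).
  apply: measurable_bounded_integrable => //; first exact: measurable_funS mg.
  exists M; split => [|M' MM' x _ /=]; first exact: num_real.
  exact: le_trans (gM x) (ltW MM').
move/(integrable_mkcond _ mA); apply: eq_integrable => // x _.
by rewrite /restrict; case: ifPn => // /negP; rewrite inE => /g0 /= ->.
Qed.

Section iint_lebesgue_rV.
Variable R : realType.
Local Notation rvec := (rvec R).
Local Notation lebesgue_rV := (@lebesgue_rV R).

Definition box d (K : R) : set (rvec d) := [set v | forall i, `|v ord0 i| <= K].

Lemma preimage_row_cons_box d K :
  @row_cons R d @^-1` box K = `[-K, K]%classic `*` box K.
Proof.
apply/seteqP; split => [[x y] h|[x y] [/= hx hy] i].
  split => [|i]; last by rewrite -(row_cons_rshift x y i); exact: h.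
  by rewrite /= in_itv /= -ler_norml -(row_cons_lshift x y ord0); exact: h.
case: (split_ordP (i : 'I_(1 + d))) => k ->; last by rewrite row_cons_rshift.
by rewrite row_cons_lshift; move: hx; rewrite in_itv /= -ler_norml.
Qed.

Lemma measurable_box d K : measurable (box K : set (rvec d)).
Proof.
elim: d => [|d IH].
  rewrite (_ : box K = setT); first exact: measurableT.
  by apply/seteqP; split => // v _ [].
have -> : box K = @row_uncons R d @^-1` (@row_cons R d @^-1` box K).
  by apply/seteqP; split => v; rewrite /preimage /= row_unconsK.
rewrite preimage_row_cons_box -[X in measurable X]setTI.
by apply: measurable_row_uncons => //; apply: measurableX => //; exact: measurable_itv.
Qed.

Lemma lebesgue_rV_box_lty d K : (lebesgue_rV d (box K) < +oo)%E.
Proof.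
elim: d => [|d IH]; first by rewrite /= diracE; case: (_ \in _); rewrite ?ltry.
rewrite /= /lebesgue_rV_succ /pushforward preimage_row_cons_box.
rewrite product_measure1E; [|exact: measurable_itv|exact: measurable_box].
rewrite lte_mul_pinfty //; have := @lebesgue_measure_itv R `[-K, K]; rewrite /= => ->.
by case: ifP; rewrite -?EFinD.
Qed.

Lemma Rintegral_lebesgue_rV_succ d (f : rvec d.+1 -> R) :
  measurable_fun [set: rvec d.+1] f ->
  (lebesgue_measure \x lebesgue_rV d)%E.-integrable setT
    (EFin \o (f \o row_cons)) ->
  (forall x, (lebesgue_rV d).-integrable setT
    (EFin \o (fun y => f (row_cons (x, y))))) ->
  Rintegral (lebesgue_rV d.+1) setT f =
  Rintegral lebesgue_measure setT
    (fun x => Rintegral (lebesgue_rV d) setT (fun y => f (row_cons (x, y)))).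
Proof.
move=> mf intf intsec; rewrite /Rintegral /=.
rewrite integral_pushforward //; [|exact: measurable_row_cons|exact/measurable_EFinP].
rewrite preimage_setT -integral12_prod_meas1 //; congr fine.
apply: eq_integral => x _.
by rewrite fineK //; exact: integrable_fin_num (intsec x).
Qed.

Lemma iint_Rintegral d (f : rvec d -> R) (M K : R) :
  measurable_fun [set: rvec d] f -> (forall v, `|f v| <= M) ->
  (forall v, ~ box K v -> f v = 0) ->
  iint f = Rintegral (lebesgue_rV d) setT f.
Proof.
elim: d f => [|d IH] f mf fM f0.
  rewrite /Rintegral /= integral_dirac //; last exact/measurable_EFinP.
  by rewrite diracT mul1e.
have f0_sec x y : ~ box K y -> f (row_cons (x, y)) = 0.
  move=> Ky; apply: f0 => Kxy; apply: Ky.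
  have : (row_cons @^-1` box K) (x, y) := Kxy.
  by rewrite preimage_row_cons_box => -[].
have msec x : measurable_fun [set: rvec d] (fun y => f (row_cons (x, y))).
  apply: (measurableT_comp (f := f)) => //.
  apply: (measurableT_comp (f := row_cons)); first exact: measurable_row_cons.
  exact: measurable_fun_pair.
rewrite Rintegral_lebesgue_rV_succ //.
- rewrite /iint -/iint; apply: congr1; apply: funext => x /=.
  exact: (IH _ (msec x) (fun y => fM _) (f0_sec x)).
- apply: (@integrable_bounded_support _ _ _ _
    (`[-K, K]%classic `*` box K : set (measurableTypeR R * rvec d)) _ M).
  + by apply: measurableX; [exact: measurable_itv|exact: measurable_box].
  + by rewrite -preimage_row_cons_box; exact: lebesgue_rV_box_lty d.+1 K.
  + exact: measurableT_comp mf (@measurable_row_cons R d).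
  + by move=> ?; exact: fM.
  + by move=> xy; rewrite -preimage_row_cons_box => /f0.
- move=> x; apply: (integrable_bounded_support (A := box K) (M := M)) => //.
  + exact: measurable_box.
  + exact: lebesgue_rV_box_lty.
  + by move=> y /f0_sec.
Qed.

End iint_lebesgue_rV.

Section euclidean_norm.
Context {R : realType} {d : nat}.
Implicit Types x a b : 'rV[R]_d.

Lemma norm2_ge0 x : 0 <= norm2 x.
Proof. exact: sqrtr_ge0. Qed.

Lemma sqr_norm2 x : norm2 x ^+ 2 = \sum_(i < d) x ord0 i ^+ 2.
Proof. by rewrite /norm2 sqr_sqrtr // sumr_ge0 // => i _; exact: sqr_ge0. Qed.

Lemma norm20 : norm2 (0 : 'rV[R]_d) = 0.
Proof. by rewrite /norm2 big1 ?sqrtr0 // => i _; rewrite mxE expr0n. Qed.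

Lemma coord_le_norm2 x i : `|x ord0 i| <= norm2 x.
Proof.
rewrite -(ler_pXn2r (n := 2)) ?nnegrE ?norm2_ge0 //.
rewrite sqr_norm2 real_normK ?num_real //.
by rewrite (bigD1 i) //= lerDl sumr_ge0 // => j _; exact: sqr_ge0.
Qed.

Lemma sqr_dot_le a b : (\sum_(i < d) a ord0 i * b ord0 i) ^+ 2 <=
  (\sum_(i < d) a ord0 i ^+ 2) * (\sum_(i < d) b ord0 i ^+ 2).
Proof.
set s := \sum_(i < d) _ * _; set sa := \sum_(i < d) _ ^+ 2.
set sb := \sum_(i < d) _ ^+ 2.
have [sb0|sbn0] := eqVneq sb 0.
  have bi0 i : b ord0 i = 0.
    apply/eqP; rewrite -normr_le0 (le_trans (coord_le_norm2 b i)) //.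
    by rewrite /norm2 -/sb sb0 sqrtr0.
  by rewrite /s big1 ?expr0n ?sb0 ?mulr0 // => i _; rewrite bi0 mulr0.
have sb_gt0 : 0 < sb by rewrite lt_def sbn0 /sb -sqr_norm2 sqr_ge0.
(* The squared norm of [sb *: a - s *: b] is [sb * (sa * sb - s ^+ 2)]. *)
have : 0 <= \sum_(i < d) (sb * a ord0 i - s * b ord0 i) ^+ 2.
  by rewrite sumr_ge0 // => i _; exact: sqr_ge0.
rewrite (eq_bigr (fun i => sb ^+ 2 * a ord0 i ^+ 2
  - (2 * sb * s) * (a ord0 i * b ord0 i) + s ^+ 2 * b ord0 i ^+ 2)); last first.
  by move=> i _; ring.
rewrite !big_split /= sumrN -!mulr_sumr -/s -/sa -/sb.
have -> : sb ^+ 2 * sa - 2 * sb * s * s + s ^+ 2 * sb = sb * (sa * sb - s ^+ 2) by ring.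
by rewrite pmulr_rge0 // subr_ge0.
Qed.

Lemma dot_le_norm2 a b : `|\sum_(i < d) a ord0 i * b ord0 i| <= norm2 a * norm2 b.
Proof.
rewrite -(ler_pXn2r (n := 2)) ?nnegrE ?mulr_ge0 ?norm2_ge0 //.
by rewrite exprMn !sqr_norm2 real_normK ?sqr_dot_le ?num_real.
Qed.

End euclidean_norm.

Section ratio_bounds.
Context {R : realFieldType}.

Lemma ler_dist_ratio (u u' s : R) : 1 <= s -> 0 <= u ->
  u' <= s * u -> u <= s * u' -> `|u' - u| <= (s - 1) * u.
Proof. by move=> s1 u0 h1 h2; rewrite ler_norml; apply/andP; split; nra. Qed.

Lemma ler_div_ratio2 (a a' T T' r : R) : 0 <= a' -> 0 < T -> 0 < T' ->
  a' <= r * a -> T <= r * T' -> a' / T' <= r ^+ 2 * (a / T).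
Proof.
by move=> a'0 T0 T'0 h1 h2; rewrite ler_pdivrMr // mulrAC mulrA ler_pdivlMr //; nra.
Qed.

End ratio_bounds.

Section Rintegral_sum.
Context {R : realType} dT (T : measurableType dT) (mu : {measure set T -> \bar R}).
Variables (D : set T) (I : Type) (F : I -> T -> R).
Hypotheses (mD : measurable D) (intF : forall i, mu.-integrable D (EFin \o F i)).

Lemma integrable_sumr (s : seq I) :
  mu.-integrable D (EFin \o (fun x => \sum_(i <- s) F i x)).
Proof.
have := @integrable_sum _ _ _ _ _ mD _ s xpredT _ (fun i _ => intF i).
by apply: eq_integrable => // x _; rewrite /= sumEFin.
Qed.

Lemma Rintegral_sum (s : seq I) :
  \int[mu]_(x in D) (\sum_(i <- s) F i x) = \sum_(i <- s) \int[mu]_(x in D) F i x.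
Proof.
elim: s => [|i s IH].
  by under eq_Rintegral do rewrite big_nil; rewrite big_nil Rintegral_cst // mul0r.
under eq_Rintegral do rewrite big_cons.
by rewrite big_cons RintegralD // ?IH //; exact: integrable_sumr.
Qed.

End Rintegral_sum.

Section weighted_mean.
Context {R : realType} {d : nat} (mu : {measure set rvec R d -> \bar R}).
Local Notation rvec := (rvec R d).

Definition wmean (W : rvec -> R) : 'rV[R]_d :=
  \row_(i < d) ((\int[mu]_x (x ord0 i * W x)) / \int[mu]_x W x).

Definition dominated (W g : rvec -> R) :=
  measurable_fun [set: rvec] g /\ exists C, forall x, `|g x| <= C * W x.

Section dominated.
Variables (W : rvec -> R) (D : R).
Hypotheses (intW : mu.-integrable [set: rvec] (EFin \o W))
  (W_ge0 : forall x, 0 <= W x) (W_supp : forall x, W x != 0 -> norm2 x <= D).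

Lemma integrable_dominated g : dominated W g -> mu.-integrable setT (EFin \o g).
Proof.
move=> [mg [C gC]]; apply: le_integrable (integrableZl measurableT C intW) => //.
  exact/measurable_EFinP.
by move=> x _; rewrite /= lee_fin (le_trans (gC x)) // ler_norm.
Qed.

Lemma dominated_refl : dominated W W.
Proof.
split; first by apply/measurable_EFinP; exact: measurable_int intW.
by exists 1 => x; rewrite mul1r ger0_norm.
Qed.

Lemma dominatedD f g : dominated W f -> dominated W g ->
  dominated W (fun x => f x + g x).
Proof.
move=> [mf [C1 h1]] [mg [C2 h2]]; split; first exact: measurable_funD.
by exists (C1 + C2) => x; rewrite mulrDl (le_trans (ler_normD _ _)) ?lerD.
Qed.

Lemma dominatedZ c g : dominated W g -> dominated W (fun x => c * g x).
Proof.
move=> [mg [C h]]; split; first exact: measurable_funM.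
by exists (`|c| * C) => x; rewrite normrM -mulrA ler_wpM2l.
Qed.

Lemma dominated_coord i g : dominated W g -> dominated W (fun x => x ord0 i * g x).
Proof.
move=> [mg [C h]]; split; first exact: measurable_funM (measurable_coord i) mg.
exists (D * C) => x; have [Wx0|Wx0] := eqVneq (W x) 0.
  have /eqP gx0 : g x == 0 by rewrite -normr_le0 -(mulr0 C) -Wx0.
  by rewrite gx0 mulr0 normr0 Wx0 !mulr0.
rewrite normrM -mulrA ler_pM //.
exact: le_trans (coord_le_norm2 x i) (W_supp Wx0).
Qed.

Lemma moment_norm_le h k : dominated W h -> dominated W k ->
  (forall x, norm2 x * `|h x| <= k x) ->
  norm2 (\row_(i < d) \int[mu]_x (x ord0 i * h x)) <= \int[mu]_x k x.
Proof.
move=> dh dk hk; set w := \row_(i < d) _.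
have dwh i : dominated W (fun x => w ord0 i * (x ord0 i * h x)).
  exact/dominatedZ/dominated_coord.
suff : norm2 w ^+ 2 <= norm2 w * \int[mu]_x k x.
  have [->|w0] := eqVneq (norm2 w) 0.
    move=> _; apply: Rintegral_ge0 => x _.
    exact: le_trans (mulr_ge0 (norm2_ge0 x) (normr_ge0 _)) (hk x).
  by rewrite expr2 ler_pM2l // lt_def w0 norm2_ge0.
(* |w|^2 = int <w, x> h x <= int |w| |x| |h x| <= |w| int k *)
have -> : norm2 w ^+ 2 = \int[mu]_x (\sum_(i < d) w ord0 i * (x ord0 i * h x)).
  rewrite sqr_norm2 Rintegral_sum // => [|i]; last exact: integrable_dominated.
  apply: eq_bigr => i _; rewrite RintegralZl //; last first.
    exact/integrable_dominated/dominated_coord.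
  by rewrite expr2 {1}/w mxE.
rewrite -RintegralZl //; last exact: integrable_dominated.
apply: le_Rintegral => //.
  by apply: integrable_sumr => // i; exact: integrable_dominated.
  exact/integrable_dominated/dominatedZ.
move=> x _; under eq_bigr do rewrite mulrA.
rewrite -mulr_suml (le_trans (ler_norm _)) // normrM.
apply: le_trans (ler_wpM2r (normr_ge0 _) (dot_le_norm2 w x)) _.
by rewrite -mulrA ler_wpM2l ?norm2_ge0.
Qed.

Lemma wmean_dist_le (W' : rvec -> R) (rho : R) :
  measurable_fun [set: rvec] W' -> 0 <= D -> 1 <= rho ->
  (forall x, W x <= rho * W' x) -> (forall x, W' x <= rho * W x) ->
  norm2 (wmean W' - wmean W) <= D * (rho ^+ 2 - 1).
Proof.
move=> mW' D0 rho1 WW' W'W; have rho0 : 0 < rho := lt_le_trans ltr01 rho1.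
have rho2 : 0 <= rho ^+ 2 - 1 by rewrite subr_ge0 expr_ge1 // ltW.
have W'_ge0 x : 0 <= W' x by rewrite -(pmulr_rge0 _ rho0) (le_trans (W_ge0 x)).
have dW' : dominated W W' by split => //; exists rho => x; rewrite ger0_norm.
set T := \int[mu]_x W x; set T' := \int[mu]_x W' x.
have T_le : T <= rho * T'.
  rewrite -RintegralZl //; last exact: integrable_dominated.
  by apply: le_Rintegral => //; exact/integrable_dominated/dominatedZ.
have T'_le : T' <= rho * T.
  rewrite -RintegralZl //; apply: le_Rintegral => //; first exact: integrable_dominated.
  exact/integrable_dominated/dominatedZ/dominated_refl.
have [T0|Tn0] := eqVneq T 0.
  have T'0 : T' = 0.
    by apply/eqP; rewrite eq_le Rintegral_ge0 // andbT (le_trans T'_le) // T0 mulr0.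
  rewrite (_ : wmean W' - wmean W = 0) ?norm20 ?mulr_ge0 //.
  by apply/rowP => i; rewrite !mxE -/T -/T' T0 T'0 invr0 !mulr0 subrr.
have T_gt0 : 0 < T by rewrite lt_def Tn0 Rintegral_ge0.
have T'_gt0 : 0 < T' by rewrite -(pmulr_rgt0 _ rho0) (lt_le_trans T_gt0).
pose h x := T'^-1 * W' x + - T^-1 * W x.
have dh : dominated W h.
  by apply: dominatedD; apply: dominatedZ => //; exact: dominated_refl.
have -> : wmean W' - wmean W = \row_(i < d) \int[mu]_x (x ord0 i * h x).
  apply/rowP => i; rewrite !mxE; transitivity
    (\int[mu]_x (T'^-1 * (x ord0 i * W' x) + - T^-1 * (x ord0 i * W x))); last first.
    by apply: eq_Rintegral => x _; rewrite mulrDr !(mulrCA (x ord0 i)).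
  have dW'i := dominated_coord i dW'; have dWi := dominated_coord i dominated_refl.
  rewrite RintegralD ?RintegralZl //; try exact/integrable_dominated/dominatedZ.
  all: try exact: integrable_dominated.
  by rewrite -/T -/T'; ring.
have dk : dominated W (fun x => D * (rho ^+ 2 - 1) / T * W x).
  exact/dominatedZ/dominated_refl.
apply: le_trans (moment_norm_le dh dk _) _.
- move=> x; have [Wx0|Wx0] := eqVneq (W x) 0.
    have W'x0 : W' x = 0.
      by apply/eqP; rewrite eq_le W'_ge0 andbT (le_trans (W'W x)) // Wx0 mulr0.
    by rewrite /h Wx0 W'x0 !mulr0 addr0 normr0 mulr0.
  have hx : `|h x| <= (rho ^+ 2 - 1) * (W x / T).
    rewrite /h mulNr !(mulrC _^-1).
    rewrite ler_dist_ratio ?divr_ge0 ?expr_ge1 ?(ltW rho0) ?(ltW T_gt0) //.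
      exact: ler_div_ratio2 (W'_ge0 x) T_gt0 T'_gt0 (W'W x) T_le.
    exact: ler_div_ratio2 (W_ge0 x) T'_gt0 T_gt0 (WW' x) T'_le.
  apply: le_trans (ler_pM (norm2_ge0 x) (normr_ge0 _) (W_supp Wx0) hx) _.
  by rewrite !mulrA mulrAC.
- by rewrite RintegralZl // -/T divfK ?gt_eqF.
Qed.

End dominated.
End weighted_mean.

Section log_ratio.
Context {R : realType}.

Lemma lnratio_ge0 (a b : R) : (0 <= lnratio a b)%E.
Proof. by rewrite /lnratio; case: ifP; rewrite ?lee_fin. Qed.

Lemma lnratio_le (a b r : R) : 0 < b -> (lnratio a b <= r%:E)%E ->
  a <= expR r * b /\ b <= expR r * a.
Proof.
rewrite /lnratio => b0; case: ifPn => // ab0.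
rewrite lee_fin ler_norml => /andP[lo hi]; have er0 := expR_gt0 r.
split; first by rewrite -ler_pdivrMr // -[_ / _]lnK ?posrE // ler_expR.
have : expR (- r) * b <= a.
  by rewrite -ler_pdivlMr // -[_ / _]lnK ?posrE // ler_expR.
by rewrite -(ler_pM2l er0) mulrA -expRD subrr expR0 mul1r.
Qed.

Lemma expR_sub1_le (x : R) : 0 <= x -> expR x - 1 <= x * expR x.
Proof.
move=> x0; have := ler_wpM2r (ltW (expR_gt0 x)) (expR_ge1Dx (- x)).
by rewrite -expRD addNr expR0; nra.
Qed.

End log_ratio.

Section velocity.
Context {R : realType} {d : nat} (Om : set 'rV[R]_d).
Hypotheses (Om_compact : compact Om) (Om_n0 : Om !=set0).

Lemma compact_coord_bounded :
  exists2 K, 0 <= K & forall x, Om x -> forall i, `|x ord0 i| <= K.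
Proof.
have [M [_ OmM]] := compact_bounded Om_compact.
exists (`|M| + 1) => // x Ox i; apply: le_trans (OmM _ _ _ Ox); last first.
  by rewrite (le_lt_trans (ler_norm M)) // ltrDl.
rewrite [leRHS]mx_normrE.
exact: (le_bigmax _ (fun ij : 'I_1 * 'I_d => `|x ij.1 ij.2|) (ord0, i)).
Qed.

Lemma norm2_le_diam a b : Om a -> Om b -> norm2 (a - b) <= diam Om.
Proof.
move=> Oa Ob; have [K K0 OmK] := compact_coord_bounded.
apply: sup_upper_bound; last by exists a => //; exists b.
split; first by exists (norm2 (a - b)); exists a => //; exists b.
exists (Num.sqrt (\sum_(i < d) (K + K) ^+ 2)) => _ [x Ox [y Oy <-]].
apply: ler_wsqrtr; apply: ler_sum => i _; rewrite -real_normK ?num_real //.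
rewrite ler_pXn2r ?nnegrE ?addr_ge0 // !mxE (le_trans (ler_normB _ _)) //.
by rewrite lerD ?OmK.
Qed.

Lemma diam_ge0 : 0 <= diam Om.
Proof.
by case: Om_n0 => a Oa; rewrite (le_trans (norm2_ge0 (a - a))) ?norm2_le_diam.
Qed.

Lemma Sset_norm2_le t z delta : Sset Om t z delta -> norm2 delta <= diam Om.
Proof.
move=> [Om0 Om1]; have := norm2_le_diam Om1 Om0.
by rewrite (_ : _ - _ = delta) //; apply/rowP => i; rewrite !mxE; ring.
Qed.

Definition vel_weight (q0 q1 : 'rV[R]_d -> R) t z (delta : rvec R d) : R :=
  q0 (z - t *: delta) * q1 (z + (1 - t) *: delta).

Lemma vel_weight_supp q0 q1 t z delta : estimator Om q0 -> estimator Om q1 ->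
  vel_weight q0 q1 t z delta != 0 -> Sset Om t z delta.
Proof.
move=> [_ q0_supp] [_ q1_supp]; rewrite mulf_eq0 negb_or => /andP[n0 n1].
by split; apply/not_notP => hn; [move: n0|move: n1];
  rewrite ?q0_supp ?q1_supp ?eqxx.
Qed.

Lemma vel_weight_norm2_le q0 q1 t z delta : estimator Om q0 -> estimator Om q1 ->
  vel_weight q0 q1 t z delta != 0 -> norm2 delta <= diam Om.
Proof. by move=> e0 e1 /(vel_weight_supp e0 e1); exact: Sset_norm2_le. Qed.

Lemma vel_weight_box q0 q1 t z delta : estimator Om q0 -> estimator Om q1 ->
  ~ box (diam Om) delta -> vel_weight q0 q1 t z delta = 0.
Proof.
move=> e0 e1 Kdelta; apply/eqP/negP => /negP/(vel_weight_norm2_le e0 e1) Ddelta.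
by apply: Kdelta => i; exact: le_trans (coord_le_norm2 _ _) Ddelta.
Qed.

Lemma measurable_affine (z : 'rV[R]_d) (a : R) :
  measurable_fun [set: rvec R d] (fun delta => z + a *: delta : rvec R d).
Proof.
apply: measurable_fun_rvec => i; under eq_fun do rewrite !mxE.
by apply: measurable_funD => //; apply: measurable_funM => //; exact: measurable_coord.
Qed.

Lemma measurable_vel_weight q0 q1 t z : rV_mfun q0 -> rV_mfun q1 ->
  measurable_fun [set: rvec R d] (vel_weight q0 q1 t z).
Proof.
move=> mq0 mq1; have mq (q : rvec R d -> R) : rV_mfun q -> measurable_fun setT q.
  by move=> hq _ B mB; rewrite setTI; exact: hq.
apply: measurable_funM; last exact: measurableT_comp (mq _ mq1) (measurable_affine _ _).
under eq_fun do rewrite -scaleNr.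
exact: measurableT_comp (mq _ mq0) (measurable_affine _ _).
Qed.

Lemma iint0 n : iint (fun _ : 'rV[R]_n => 0) = 0.
Proof.
elim: n => [//|n IH] /=; under eq_fun do rewrite IH.
by rewrite Rintegral_cst // mul0r.
Qed.

Lemma vel_diam0 q0 q1 t z : diam Om = 0 -> vel Om q0 q1 t z = 0.
Proof.
move=> D0; apply/rowP => i; rewrite !mxE; set f := fun delta => _.
rewrite (_ : f = fun=> 0) ?iint0 ?mul0r //; apply/funext => delta; rewrite /f indicE.
have [/set_mem S|] := boolP (delta \in _); last by rewrite !mul0r.
have /eqP -> : delta ord0 i == 0.
  by rewrite -normr_le0 -D0 (le_trans (coord_le_norm2 _ _)) ?(Sset_norm2_le S).
by rewrite !(mulr0, mul0r).
Qed.

Lemma vel_wmean q0 q1 t z (M : R) : estimator Om q0 -> estimator Om q1 ->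
  (forall delta, `|vel_weight q0 q1 t z delta| <= M) ->
  vel Om q0 q1 t z = wmean (lebesgue_rV R d) (vel_weight q0 q1 t z).
Proof.
move=> e0 e1 WM; have W_supp delta := @vel_weight_norm2_le _ _ t z delta e0 e1.
have W_box delta := @vel_weight_box _ _ t z delta e0 e1.
set W := vel_weight q0 q1 t z in WM W_supp W_box *.
have mW : measurable_fun setT W by apply: measurable_vel_weight; [case: e0|case: e1].
have indW delta : \1_(Sset Om t z) delta * W delta = W delta.
  rewrite indicE; case: (boolP (delta \in _)) => [_|/negP S]; first by rewrite mul1r.
  by rewrite mul0r; apply/esym/eqP/negP => /negP/(vel_weight_supp e0 e1)/mem_set.
apply/rowP => i; rewrite !mxE; congr (_ / _).
- transitivity (iint (fun delta => delta ord0 i * W delta)).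
    by congr iint; apply/funext => delta; rewrite -indW /W /vel_weight; ring.
  apply: (iint_Rintegral (M := diam Om * M) (K := diam Om)).
  + by apply: measurable_funM => //; exact: measurable_coord.
  + move=> delta; have [W0|/W_supp Ddelta] := eqVneq (W delta) 0.
      by rewrite W0 mulr0 normr0 mulr_ge0 ?diam_ge0 // (le_trans _ (WM delta)).
    by rewrite normrM ler_pM // (le_trans (coord_le_norm2 _ _)).
  + by move=> delta /W_box ->; rewrite mulr0.
- transitivity (iint W).
    by congr iint; apply/funext => delta; rewrite -indW /W /vel_weight; ring.
  exact: iint_Rintegral mW WM W_box.
Qed.

Lemma good_density_estimator p : good_density Om p -> estimator Om p.
Proof. by case=> mp [_ [p_supp _]]. Qed.

Lemma good_density_bounded p : good_density Om p ->
  (forall x, 0 <= p x) /\ exists M, forall x, p x <= M.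
Proof.
case=> _ [p_ge0 [p_supp [_ [_ [[M pM] _]]]]]; split => //; exists M => x.
have [/pM //|/p_supp ->] := pselect (Om x).
by have [a /pM] := Om_n0; exact: le_trans (p_ge0 a).
Qed.

Lemma density_ratio_le p q r : good_density Om p -> estimator Om q ->
  (forall x, Om x -> (lnratio (q x) (p x) <= r%:E)%E) ->
  forall x, q x <= expR r * p x /\ p x <= expR r * q x.
Proof.
case=> _ [_ [p_supp [_ [_ [_ [c [c0 pc]]]]]]] [_ q_supp] qpr x.
have [Ox|Ox] := pselect (Om x); last by rewrite p_supp ?q_supp ?mulr0.
exact: lnratio_le (lt_le_trans c0 (pc x Ox)) (qpr x Ox).
Qed.

Section densities.
Variables p0 p1 : 'rV[R]_d -> R.
Hypotheses (gp0 : good_density Om p0) (gp1 : good_density Om p1).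

Section estimators.
Variables q0 q1 : 'rV[R]_d -> R.
Hypotheses (eq0 : estimator Om q0) (eq1 : estimator Om q1).
Local Notation r := (rlog Om p0 p1 q0 q1).

Lemma lnratio_le_rlog x : Om x ->
  (lnratio (q0 x) (p0 x) <= r)%E /\ (lnratio (q1 x) (p1 x) <= r)%E.
Proof.
by move=> Ox; apply/andP; rewrite -ge_max; apply: ereal_sup_ubound; exists x.
Qed.

Lemma rlog_ge0 : (0 <= r)%E.
Proof. by case: Om_n0 => x /lnratio_le_rlog[+ _]; exact/le_trans/lnratio_ge0. Qed.

Lemma vel_dist_le (s : R) t z : (r <= s%:E)%E ->
  norm2 (vel Om q0 q1 t z - vel Om p0 p1 t z) <= diam Om * (expR (4 * s) - 1).
Proof.
move=> rs; have e1 : 1 <= expR s.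
  by rewrite -expR0 ler_expR -lee_fin (le_trans rlog_ge0).
have [hq0 hq1] : (forall x, q0 x <= expR s * p0 x /\ p0 x <= expR s * q0 x) /\
    (forall x, q1 x <= expR s * p1 x /\ p1 x <= expR s * q1 x).
  by split; apply: density_ratio_le => // x /lnratio_le_rlog[h0 h1];
    [exact: le_trans h0 rs|exact: le_trans h1 rs].
have [p0_ge0 [M0 p0M]] := good_density_bounded gp0.
have [p1_ge0 [M1 p1M]] := good_density_bounded gp1.
have ep0 := good_density_estimator gp0; have ep1 := good_density_estimator gp1.
have W_ge0 delta : 0 <= vel_weight p0 p1 t z delta by rewrite mulr_ge0.
have WM delta : `|vel_weight p0 p1 t z delta| <= M0 * M1.
  by rewrite ger0_norm // ler_pM.
have q_ge0 (q p : 'rV[R]_d -> R) : (forall x, 0 <= p x) ->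
    (forall x, p x <= expR s * q x) -> forall x, 0 <= q x.
  by move=> p_ge0 pq x; rewrite -(pmulr_rge0 _ (expR_gt0 s)) (le_trans (p_ge0 x)).
have q0_ge0 := q_ge0 _ _ p0_ge0 (fun x => (hq0 x).2).
have q1_ge0 := q_ge0 _ _ p1_ge0 (fun x => (hq1 x).2).
have WW' delta :
    vel_weight p0 p1 t z delta <= expR s ^+ 2 * vel_weight q0 q1 t z delta.
  by rewrite /vel_weight expr2 mulrACA ler_pM ?(hq0 _).2 ?(hq1 _).2.
have W'W delta :
    vel_weight q0 q1 t z delta <= expR s ^+ 2 * vel_weight p0 p1 t z delta.
  by rewrite /vel_weight expr2 mulrACA ler_pM ?(hq0 _).1 ?(hq1 _).1.
have intW : (lebesgue_rV R d).-integrable setT (EFin \o vel_weight p0 p1 t z).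
  apply: (integrable_bounded_support (A := box (diam Om)) (M := M0 * M1)) => //.
  - exact: measurable_box.
  - exact: lebesgue_rV_box_lty.
  - by apply: measurable_vel_weight; [case: ep0|case: ep1].
  - by move=> delta; exact: vel_weight_box.
rewrite (@vel_wmean q0 q1 t z (expR s ^+ 2 * (M0 * M1))) //; last first.
  move=> delta; rewrite ger0_norm ?mulr_ge0 //; apply: le_trans (W'W delta) _.
  by rewrite ler_pM2l ?exprn_gt0 ?expR_gt0 // -(ger0_norm (W_ge0 delta)).
rewrite (@vel_wmean p0 p1 t z (M0 * M1)) //.
rewrite (_ : expR (4 * s) = (expR s ^+ 2) ^+ 2); last by rewrite -exprM expRM_natl.
apply: wmean_dist_le => //.
- by move=> delta; exact: vel_weight_norm2_le.
- by apply: measurable_vel_weight; [case: eq0|case: eq1].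
- exact: diam_ge0.
- by rewrite expr_ge1 // (le_trans ler01).
Qed.

Lemma supdiff_le :
  (supdiff Om p0 p1 q0 q1 <= (diam Om)%:E * (expeR (4%:E * r) - 1%E))%E.
Proof.
apply: ge_ereal_sup => _ [[t z] _ <-] /=.
have := rlog_ge0; case Er : (rlog Om p0 p1 q0 q1) => [s| |] // _.
  by rewrite /= -EFinM lee_fin vel_dist_le // Er.
have [D0|D_gt0] := eqVneq (diam Om) 0.
  by rewrite !vel_diam0 // subrr norm20 D0 mul0e.
by rewrite gt0_muley //= gt0_muley ?leey // lte_fin lt_def D_gt0 diam_ge0.
Qed.

Lemma supdiff_le_rlog : (r <= 1%:E)%E ->
  (supdiff Om p0 p1 q0 q1 <= (4 * diam Om * expR 4 + 1)%:E * r)%E.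
Proof.
have := rlog_ge0; case Er : (rlog Om p0 p1 q0 q1) => [s| |] //.
rewrite !lee_fin => s0 s1.
apply: le_trans supdiff_le _; rewrite Er /= -EFinM lee_fin.
have e4s : expR (4 * s) - 1 <= 4 * expR 4 * s.
  apply: le_trans (expR_sub1_le _) _; first by rewrite mulr_ge0.
  rewrite mulrAC; apply: (ler_wpM2r s0).
  by rewrite ler_pM2l // ler_expR ler_piMr.
apply: le_trans (ler_wpM2l diam_ge0 e4s) _.
lra.
Qed.

End estimators.
End densities.
End velocity.

Section stochastic_order.
Context {R : realType} (dT : measure_display) (T : measurableType dT)
  (P : probability T R).
Local Open Scope ereal_scope.

Lemma le_outerP (A B : set T) : A `<=` B -> outerP P A <= outerP P B.
Proof.
move=> AB; apply: le_ereal_inf => _ [C [mC BC] <-].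
by exists C => //; split => //; exact: subset_trans BC.
Qed.

Lemma O_p_of_local_bound (X a : nat -> T -> \bar R) (M : R) : (0 < M)%R ->
  (forall n w, a n w <= 1%:E -> X n w <= M%:E * a n w) ->
  o_p1 P a -> O_p P X a.
Proof.
move=> M0 Xa a_op eps eps0; exists M; split => //.
have [N _ aN] := a_op 1%R ltr01 _ (nbhs_open_ereal_lt (f := fun=> eps) eps0).
exists N => n /aN /ltW; apply: le_trans; apply: le_outerP => w /= MaX.
by rewrite ltNge; apply/negP => /Xa; rewrite leNgt MaX.
Qed.

End stochastic_order.

Theorem theorem11 (R : realType) (d : nat) (Om : set 'rV[R]_d)
  (p0 p1 : 'rV[R]_d -> R) :
  compact Om -> convex_rV Om -> interior Om !=set0 ->
  good_density Om p0 -> good_density Om p1 ->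
  (forall q0 q1 : 'rV[R]_d -> R,
     estimator Om q0 -> estimator Om q1 ->
     (supdiff Om p0 p1 q0 q1
       <= (2 * diam Om)%:E
          * (expeR (4%:E * rlog Om p0 p1 q0 q1) - 1%E))%E)
  /\
  (forall (dT : measure_display) (T : measurableType dT)
          (P : probability T R) (Q0 Q1 : nat -> T -> 'rV[R]_d -> R),
     (forall n w, estimator Om (Q0 n w) /\ estimator Om (Q1 n w)) ->
     o_p1 P (fun n w => rlog Om p0 p1 (Q0 n w) (Q1 n w)) ->
     O_p P (fun n w => supdiff Om p0 p1 (Q0 n w) (Q1 n w))
           (fun n w => rlog Om p0 p1 (Q0 n w) (Q1 n w))).
Proof.
move=> Om_compact _ [z0 /interior_subset Om_z0] gp0 gp1.
have Om_n0 : Om !=set0 by exists z0.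
have D0 := diam_ge0 Om_compact Om_n0.
split => [q0 q1 eq0 eq1|dT T P Q0 Q1 eQ].
  apply: le_trans (supdiff_le Om_compact Om_n0 gp0 gp1 eq0 eq1) _.
  apply: lee_wpmul2r; last by rewrite lee_fin ler_peMl // ler1n.
  by rewrite sube_ge0 ?fin_numE // -expeR0 lee_expeR mule_ge0 ?rlog_ge0.
apply: (O_p_of_local_bound (M := 4 * diam Om * expR 4 + 1)).
  by rewrite ltr_wpDl ?mulr_ge0 ?expR_ge0.
by move=> n w; have [eq0 eq1] := eQ n w; exact: supdiff_le_rlog.
Qed.
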